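(* Let $G\simeq C_2^3$ and let $f$ be an automorphism of $\mathcal{P}_{0}(G)$ with trivial pullback. Then $f$ is the identity.
   Context: For an additively written finite abelian group $G$, $\mathcal{P}_{0}(G)$ is the monoid of all subsets of $G$ containing $0$, with setwise addition and identity $\{0\}$. An automorphism $f$ of $\mathcal{P}_0(G)$ has trivial pullback if $f(\{0,a\})=\{0,a\}$ for all $a\in G$. $C_2$ is the cyclic group of order $2$. *)

From mathcomp Require Import all_boot all_order all_algebra.
Set Implicit Arguments. Unset Strict Implicit. Unset Printing Implicit Defensive.
Import GRing.Theory.
Local Open Scope ring_scope.

Definition sumset (G : finZmodType) (A B : {set G}) : {set G} :=
  [set a + b | a in A, b in B].

Definition P0 (G : finZmodType) := {A : {set G} | 0 \in A}.

Lemma sumset0 (G : finZmodType) (A B : P0 G) : (0 : G) \in sumset (sval A) (sval B).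
Proof.
apply/imset2P; exists 0 0; [exact: (svalP A) | exact: (svalP B) | by rewrite addr0].
Qed.

Definition P0add (G : finZmodType) (A B : P0 G) : P0 G :=
  exist _ (sumset (sval A) (sval B)) (sumset0 A B).

Definition P0one (G : finZmodType) : P0 G := exist _ [set 0] (set11 0).

Definition P0pair (G : finZmodType) (a : G) : P0 G :=
  exist (fun A : {set G} => 0 \in A) [set 0; a] (setU11 0 [set a]).

Definition is_P0_automorphism (G : finZmodType) (f : P0 G -> P0 G) : Prop :=
  [/\ bijective f,
      forall A B, f (P0add A B) = P0add (f A) (f B)
    & f (P0one G) = P0one G].

Definition trivial_pullback (G : finZmodType) (f : P0 G -> P0 G) : Prop :=
  forall a : G, f (P0pair a) = P0pair a.

From mathcomp Require Import all_boot all_order all_algebra.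
Local Open Scope ring_scope.
Import GRing.Theory.

(* Transport f along the isomorphism C_2^3 -> G to a map F on the 128 subsets of
   C_2^3 containing 0: F is additive, injective and fixes every pair {0,a}.  If F
   fixes a family K of sets, it also fixes
   - every sum of two members of K;
   - every m for which m itself is the only set X outside K \ {m} satisfying
     X + {0,a} = m + {0,a} whenever m + {0,a} lies in K (as F m must);
   - every 3-element m that becomes the only such X once one also requires,
     for each 3-element m' not yet fixed, some candidate Y for m' such that
     X + {0,a} = Y + {0,a} whenever m + {0,a} = m' + {0,a}.
   Starting from the pairs, two rounds of these rules reach all 128 sets; this
   is checked by computation. *)

Set Implicit Arguments.
Unset Strict Implicit.
Unset Printing Implicit Defensive.

Fixpoint subseqs {T : Type} (s : seq T) : seq (seq T) :=
  if s is x :: s' then [seq x :: t | t <- subseqs s'] ++ subseqs s' else [:: [::]].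

Lemma mem_subseqs (T : eqType) (s t : seq T) : (t \in subseqs s) = subseq t s.
Proof.
elim: s t => [|x s IHs] [|y t] //=; rewrite mem_cat IHs ?sub0seq ?orbT //.
have [->|neq_yx] := eqVneq y x.
  rewrite mem_map ?IHs; last by move=> u v [].
  by apply: orb_idr => /cons_subseq.
apply: orb_idl => /mapP[u _ [eq_yx _]].
by rewrite eq_yx eqxx in neq_yx.
Qed.

Lemma mask_zip_eq (T : eqType) (s t : seq T) :
  size s = size t ->
  mask [seq u.1 == u.2 | u <- zip s t] s = mask [seq u.1 == u.2 | u <- zip s t] t.
Proof.
elim: s t => [|x s IHs] [|y t] //= [/IHs eq_st].
by case: eqP => [->|_]; rewrite /= eq_st.
Qed.

Section SubsetModel.

Variables (H : zmodType) (univ : seq H).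
Hypothesis mem_univ : forall x, x \in univ.

(* A subset of H is represented by the sublist of univ it selects, so that
   equality of subsets is decidable by computation. *)
Definition canon (s : seq H) : seq H := [seq x <- univ | x \in s].
Definition lsum (s t : seq H) : seq H := canon [seq x + y | x <- s, y <- t].
Definition lpair (a : H) : seq H := canon [:: 0; a].
Definition is_lset (s : seq H) : bool := (canon s == s) && (0 \in s).
Definition lsets : seq (seq H) := [seq s <- subseqs univ | is_lset s].

Lemma mem_canon s x : (x \in canon s) = (x \in s).
Proof. by rewrite mem_filter mem_univ andbT. Qed.

Lemma canon_id s : canon (canon s) = canon s.
Proof. by apply: eq_filter => x; rewrite mem_canon. Qed.

Lemma is_lset_canon s : 0 \in s -> is_lset (canon s).
Proof. by move=> s0; rewrite /is_lset canon_id eqxx mem_canon. Qed.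

Lemma is_lset_lsum s t : is_lset s -> is_lset t -> is_lset (lsum s t).
Proof.
case/andP=> _ s0 /andP[_ t0]; apply: is_lset_canon.
by rewrite -[0]addr0 allpairs_f.
Qed.

Lemma is_lset_lpair a : is_lset (lpair a).
Proof. by apply: is_lset_canon; rewrite mem_head. Qed.

Lemma mem_lsets s : (s \in lsets) = is_lset s.
Proof.
rewrite mem_filter mem_subseqs andb_idr // => /andP[/eqP <- _].
exact: filter_subseq.
Qed.

Definition shifts (s : seq H) : seq (seq H) := [seq lsum s (lpair a) | a <- univ].

(* Everything below is shaped for vm_compute, which shares no work between
   calls and does not short-circuit && or ||: the shifts are computed once,
   and filters are nested instead of conjoined. *)
Definition profile := (seq H * seq (seq H))%type.
Definition profiles : seq profile := [seq (s, shifts s) | s <- lsets].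

Definition candidates (P : seq profile) (K : seq (seq H)) (p : profile) : seq profile :=
  let known := [seq u \in K | u <- p.2] in
  let target := mask known p.2 in
  [seq q <- [seq q <- P | mask known q.2 == target]
     | all (fun k => (k == p.1) || (q.1 != k)) K].

(* Compatibility is necessary for X = F m and Y = F m', since
   m + {0,a} = m' + {0,a} implies F m + {0,a} = F m' + {0,a}. *)
Definition compatible (sm sm' sX sY : seq (seq H)) : bool :=
  let agree := [seq u.1 == u.2 | u <- zip sm sm'] in mask agree sX == mask agree sY.

Definition linked_candidates (T : seq (profile * seq profile))
    (c : profile * seq profile) : seq profile :=
  [seq q <- c.2 | all (fun c' => has (fun q' => compatible c.1.2 c'.1.2 q.2 q'.2) c'.2) T].

Definition sum_closure (K : seq (seq H)) : seq (seq H) :=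
  let sums := [seq lsum k l | k <- K, l <- K] in
  [seq s <- lsets | s \in K ++ sums].

Definition saturate (K : seq (seq H)) : seq (seq H) :=
  let P := profiles in
  let K' := sum_closure K in
  let unknown := [seq p <- P | p.1 \notin K'] in
  let C := [seq (p, candidates P K' p) | p <- unknown] in
  (* The first rule cannot tell apart the three 3-element sets containing 0
     of a subgroup of order 4; the linked rule is run on those sets only. *)
  let T := [seq (p, candidates P K' p) | p <- unknown & size p.1 == 3] in
  K' ++ [seq c.1.1 | c <- C & [seq q.1 | q <- c.2] == [:: c.1.1]]
     ++ [seq c.1.1 | c <- T & [seq q.1 | q <- linked_candidates T c] == [:: c.1.1]].

Lemma profilesP p : p \in profiles -> is_lset p.1 /\ p.2 = shifts p.1.
Proof. by case/mapP=> s; rewrite mem_lsets => ms ->. Qed.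

Section Soundness.

Variable F : seq H -> seq H.
Hypotheses (F_lsum : forall s t, is_lset s -> is_lset t -> F (lsum s t) = lsum (F s) (F t))
           (F_lpair : forall a, F (lpair a) = lpair a)
           (F_inj : forall s t, is_lset s -> is_lset t -> F s = F t -> s = t)
           (F_lset : forall s, is_lset s -> is_lset (F s)).

Definition fixed_on (K : seq (seq H)) := {in K, forall k, is_lset k /\ F k = k}.

Lemma shifts_F m : is_lset m -> shifts (F m) = map F (shifts m).
Proof.
move=> mm; rewrite /shifts -map_comp; apply: eq_map => a /=.
by rewrite F_lsum ?F_lpair ?is_lset_lpair.
Qed.

Lemma F_in_candidates K m :
  fixed_on K -> is_lset m -> (F m, shifts (F m)) \in candidates profiles K (m, shifts m).
Proof.
move=> fixK mm; rewrite !mem_filter /=; apply/and3P; split.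
- apply/allP=> k kK; have [mk Fk] := fixK k kK.
  case: eqVneq => //= neq_km; apply: contra_neq neq_km => Fm_k.
  by apply: F_inj; rewrite // Fk.
- rewrite shifts_F // -map_mask -filter_mask map_id_in //.
  by move=> u; rewrite mem_filter => /andP[/fixK[]].
- by apply: map_f; rewrite mem_lsets F_lset.
Qed.

Lemma forced_fixed K m :
  fixed_on K -> is_lset m ->
  [seq q.1 | q <- candidates profiles K (m, shifts m)] = [:: m] -> F m = m.
Proof.
move=> fixK mm forced; have := map_f fst (F_in_candidates fixK mm).
by rewrite forced inE => /eqP.
Qed.

Lemma linked_fixed K ps m :
  fixed_on K -> is_lset m -> {subset ps <= profiles} ->
  let T := [seq (p, candidates profiles K p) | p <- ps] in
  [seq q.1 | q <- linked_candidates T ((m, shifts m), candidates profiles K (m, shifts m))]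
    = [:: m] -> F m = m.
Proof.
move=> fixK mm sub_ps T forced.
suff /(map_f fst) : (F m, shifts (F m)) \in linked_candidates T
    ((m, shifts m), candidates profiles K (m, shifts m)).
  by rewrite forced inE => /eqP.
rewrite mem_filter F_in_candidates // andbT.
apply/allP=> _ /mapP[[m' _] /sub_ps /profilesP[/= mm' ->] ->]; apply/hasP.
exists (F m', shifts (F m')); first exact: F_in_candidates.
rewrite /compatible /= !shifts_F // -!(map_mask F) mask_zip_eq //.
by rewrite !size_map.
Qed.

Lemma sum_closure_fixed K : fixed_on K -> fixed_on (sum_closure K).
Proof.
move=> fixK k; rewrite mem_filter mem_lsets mem_cat.
case/andP=> /orP[/fixK //|/allpairsP[[a b] /= [aK bK ->]]] _.
have [[ma Fa] [mb Fb]] := (fixK a aK, fixK b bK).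
by rewrite is_lset_lsum // F_lsum // Fa Fb.
Qed.

Lemma saturate_fixed K : fixed_on K -> fixed_on (saturate K).
Proof.
move=> /sum_closure_fixed fixK k; rewrite !mem_cat => /or3P[/fixK //||].
- case/mapP=> c; rewrite mem_filter => /andP[forced /mapP[[m sm]]].
  rewrite mem_filter => /andP[_ /profilesP[/= mm ->]] Ec ->; rewrite Ec in forced *.
  by split=> //; apply: forced_fixed fixK mm (eqP forced).
- case/mapP=> c; rewrite mem_filter => /andP[forced /mapP[[m sm]]].
  rewrite !mem_filter => /and3P[_ _ /profilesP[/= mm ->]] Ec ->; rewrite Ec in forced *.
  split=> //; apply: linked_fixed fixK mm _ (eqP forced).
  by move=> p; rewrite !mem_filter => /and3P[].
Qed.

Lemma lpairs_fixed : fixed_on (map lpair univ).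
Proof. by move=> _ /mapP[a _ ->]; rewrite is_lset_lpair F_lpair. Qed.

Lemma saturation_fixes_lsets n :
  all (mem (iter n saturate (map lpair univ))) lsets ->
  forall s, is_lset s -> F s = s.
Proof.
move=> /allP covered s ms.
have fixed_iter : fixed_on (iter n saturate (map lpair univ)).
  by elim: n {covered} => [|n IHn]; [exact: lpairs_fixed | exact: saturate_fixed].
by have [] := fixed_iter s (covered s _); rewrite ?mem_lsets.
Qed.

End Soundness.
End SubsetModel.

Notation Z2cube := ('Z_2 * 'Z_2 * 'Z_2)%type.
Definition Z2_elems : seq 'Z_2 := [:: 0; 1].
Definition Z2cube_elems : seq Z2cube :=
  [seq (xy, z) | xy <- [seq (x, y) | x <- Z2_elems, y <- Z2_elems], z <- Z2_elems].

Lemma Z2cube_saturated :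
  all (mem (iter 2 (saturate Z2cube_elems) (map (lpair Z2cube_elems) Z2cube_elems)))
      (lsets Z2cube_elems).
Proof. by vm_compute. Qed.

Section Transfer.

Variables (G : finZmodType) (H : zmodType) (univ : seq H) (c : H -> G).
Hypotheses (mem_univ : forall x, x \in univ)
           (c_morph : {morph c : x y / x + y}) (c_bij : bijective c).

Let c_inj : injective c := bij_inj c_bij.

Lemma c_zero : c 0 = 0.
Proof. by apply: (addrI (c 0)); rewrite -c_morph !addr0. Qed.

Lemma c_surj y : exists x, y = c x.
Proof. by case: c_bij => d _ dK; exists (d y). Qed.

Definition encode (A : P0 G) : seq H := [seq x <- univ | c x \in sval A].

Definition decode (s : seq H) : P0 G :=
  exist _ (0 |: [set y in map c s]) (setU11 0 _).

Lemma mem_encode A x : (x \in encode A) = (c x \in sval A).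
Proof. by rewrite mem_filter mem_univ andbT. Qed.

Lemma is_lset_encode A : is_lset univ (encode A).
Proof.
rewrite /is_lset mem_encode c_zero (svalP A) andbT; apply/eqP/eq_filter => x.
exact: mem_encode.
Qed.

Lemma encode_inj : injective encode.
Proof.
move=> A B eq_AB; apply: val_inj; apply/setP=> y; have [x ->] := c_surj y.
by rewrite -!mem_encode eq_AB.
Qed.

Lemma decodeK s : is_lset univ s -> encode (decode s) = s.
Proof.
case/andP=> /eqP canon_s s0; rewrite -[RHS]canon_s; apply: eq_filter => x /=.
rewrite !inE (mem_map c_inj) -c_zero (inj_eq c_inj).
by case: eqP => // ->.
Qed.

Lemma encodeK A : decode (encode A) = A.
Proof. by apply: encode_inj; rewrite decodeK // is_lset_encode. Qed.

Lemma encode_add A B : encode (P0add A B) = lsum univ (encode A) (encode B).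
Proof.
apply: eq_filter => x /=; apply/imset2P/allpairsP.
  case=> a b Aa Bb eq_x; have [[y Ey] [z Ez]] := (c_surj a, c_surj b).
  exists (y, z); rewrite /= !mem_encode -Ey -Ez; split=> //.
  by apply: c_inj; rewrite c_morph -Ey -Ez.
by case=> -[y z] /= [Ay Bz ->]; exists (c y) (c z); rewrite -?mem_encode.
Qed.

Lemma encode_pair a : encode (P0pair (c a)) = lpair univ a.
Proof.
by apply: eq_filter => x /=; rewrite !inE -c_zero !(inj_eq c_inj).
Qed.

Lemma decode_lsum s t :
  is_lset univ s -> is_lset univ t -> decode (lsum univ s t) = P0add (decode s) (decode t).
Proof. by move=> ms mt; apply: encode_inj; rewrite encode_add !decodeK // is_lset_lsum. Qed.

Lemma decode_lpair a : decode (lpair univ a) = P0pair (c a).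
Proof. by apply: encode_inj; rewrite encode_pair decodeK // is_lset_lpair. Qed.

Variable f : P0 G -> P0 G.
Hypotheses (f_aut : is_P0_automorphism f) (f_triv : trivial_pullback f).

Lemma saturation_fixes_P0 n :
  all (mem (iter n (saturate univ) (map (lpair univ) univ))) (lsets univ) ->
  forall A, f A = A.
Proof.
case: f_aut => /bij_inj f_inj f_add _ covered A.
pose F s := encode (f (decode s)).
have F_fix : forall s, is_lset univ s -> F s = s.
  apply: (saturation_fixes_lsets mem_univ _ _ _ _ covered) => [s t ms mt|a|s t ms mt|s _].
  - by rewrite /F decode_lsum // f_add encode_add.
  - by rewrite /F decode_lpair f_triv encode_pair.
  - by move/encode_inj/f_inj/(congr1 encode); rewrite !decodeK.
  - exact: is_lset_encode.
by apply: encode_inj; rewrite -[RHS]F_fix ?is_lset_encode // /F encodeK.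
Qed.

End Transfer.

Lemma mem_Z2cube_elems (x : Z2cube) : x \in Z2cube_elems.
Proof.
have Z2P (b : 'Z_2) : b \in Z2_elems by case: b => [[|[|m]] ?].
by case: x => [[a b] d]; rewrite !allpairs_f ?Z2P.
Qed.

Theorem lemma3p5 (G : finZmodType)
  (isoG : exists phi : G -> 'Z_2 * 'Z_2 * 'Z_2,
            bijective phi /\ {morph phi : x y / x + y})
  (f : P0 G -> P0 G)
  (hf : is_P0_automorphism f) (htriv : trivial_pullback f) :
  forall A : P0 G, f A = A.
Proof.
case: isoG => phi [[psi phiK psiK] phi_morph].
have psi_morph : {morph psi : x y / x + y}.
  by move=> x y; apply: (can_inj phiK); rewrite phi_morph !psiK.
exact: (saturation_fixes_P0 mem_Z2cube_elems psi_morph (Bijective psiK phiK) hf htriv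
                            Z2cube_saturated).
Qed.
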